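(* Let $\lambda\in\mathbb{R}$, let $$J_6=\begin{pmatrix}\lambda&1&0\\0&\lambda&1\\0&0&\lambda\end{pmatrix},$$ and $h>0$ with $\lambda h+2\neq 0$. Set $$\psi=\frac{e^{\lambda h}(2-\lambda h)}{\lambda h+2},\qquad \phi=\frac{h(e^{\lambda h}+1)}{\lambda h+2},\qquad \theta=\frac{1}{e^{\lambda h}+1}.$$ Then the difference scheme $$\frac{\mathbf{x}_{k+1}-\psi\mathbf{x}_k}{\phi}=J_6\big[\theta\mathbf{x}_{k+1}+(1-\theta)\mathbf{x}_k\big]$$ is exact for the system $\mathbf{x}'=J_6\mathbf{x}$.
   Context: A one-step difference scheme with step size $h>0$ for $\mathbf{x}'=M\mathbf{x}$ is called exact if for every initial vector $\mathbf{x}_0$ the sequence $(\mathbf{x}_k)$ it generates satisfies $\mathbf{x}_k=\mathbf{x}(kh)$ for all $k\ge 0$, where $\mathbf{x}(t)$ solves $\mathbf{x}'=M\mathbf{x}$, $\mathbf{x}(0)=\mathbf{x}_0$. *)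

From HB Require Import structures.
From mathcomp Require Import all_boot all_order all_algebra.
From mathcomp Require Import all_classical all_reals all_analysis.
Set Implicit Arguments. Unset Strict Implicit. Unset Printing Implicit Defensive.
Import Order.TTheory GRing.Theory Num.Theory.
Import numFieldNormedType.Exports.
Local Open Scope ring_scope.

Definition J6 {R : realType} (lam : R) : 'M[R]_3 :=
  \matrix_(i < 3, j < 3)
    (if i == j then lam else if (j == i.+1 :> nat) then 1 else 0).

Definition solves_ode {R : realType} {n : nat} (M : 'M[R]_n)
  (x : R -> 'cV[R]_n) : Prop :=
  forall t : R, derivable x t 1 /\ derive1 x t = M *m x t.

(* A one-step scheme is given by its (possibly implicit) step relation
   [step xk xk1] : "x_{k+1} = xk1 is the next iterate from x_k = xk". *)
Definition exact_scheme {R : realType} {n : nat} (h : R) (M : 'M[R]_n)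
  (step : 'cV[R]_n -> 'cV[R]_n -> Prop) : Prop :=
  forall (x0 : 'cV[R]_n) (x : R -> 'cV[R]_n),
    solves_ode M x -> x 0 = x0 ->
    forall xs : nat -> 'cV[R]_n,
      xs 0%N = x0 -> (forall k, step (xs k) (xs k.+1)) ->
      forall k, xs k = x (k%:R * h).

Definition theta_scheme {R : realType} {n : nat} (psi phi theta : R)
  (M : 'M[R]_n) (xk xk1 : 'cV[R]_n) : Prop :=
  phi^-1 *: (xk1 - psi *: xk) = M *m (theta *: xk1 + (1 - theta) *: xk).

(* The exact solution of x' = J6 x is x(t) = e^{lam t} (I + t N + t^2/2 N^2) x(0),
   N = J6 - lam I being nilpotent, so the exact solution advances on the grid by
   the fixed linear map F = exp(h J6).  The scheme is the linear system
   (phi^-1 - theta J6) x_{k+1} = (phi^-1 psi + (1 - theta) J6) x_k, whose matrix is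
   upper triangular with diagonal phi^-1 - theta lam = 2 / (h (e^{lam h} + 1)) != 0;
   hence it has the unique solution x_{k+1} = F x_k as soon as F x_k solves it,
   which is a coordinatewise identity in psi, phi and theta. *)
From HB Require Import structures.
From mathcomp Require Import all_boot all_order all_algebra.
From mathcomp Require Import all_classical all_reals all_analysis.
From mathcomp Require Import ring.
Import Order.TTheory GRing.Theory Num.Theory.
Import numFieldNormedType.Exports.

Set Implicit Arguments.
Unset Strict Implicit.
Unset Printing Implicit Defensive.
Local Open Scope ring_scope.

Definition cV3 {R : pzRingType} (a b c : R) : 'cV[R]_3 := \col_i [:: a; b; c]`_i.

Section ThreeVectors.
Variable R : pzRingType.
Implicit Types (a b c k : R) (v : 'cV[R]_3).

Lemma cV3E v : v = cV3 (v 0 0) (v 1 0) (v 2 0).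
Proof.
apply/matrixP => i j; rewrite !mxE (ord1 j).
by case: i => [[|[|[|//]]] ?]; congr (v _ _); apply: val_inj.
Qed.

Lemma add_cV3 a b c a' b' c' :
  cV3 a b c + cV3 a' b' c' = cV3 (a + a') (b + b') (c + c').
Proof. by apply/matrixP => i j; rewrite !mxE; case: i => [[|[|[|]]]]. Qed.

Lemma opp_cV3 a b c : - cV3 a b c = cV3 (- a) (- b) (- c).
Proof. by apply/matrixP => i j; rewrite !mxE; case: i => [[|[|[|]]]]. Qed.

Lemma scale_cV3 k a b c : k *: cV3 a b c = cV3 (k * a) (k * b) (k * c).
Proof. by apply/matrixP => i j; rewrite !mxE; case: i => [[|[|[|]]]]. Qed.

End ThreeVectors.

Section JordanBlock.
Variables (R : realType) (lam : R).

Lemma mul_J6_cV3 (a b c : R) :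
  J6 lam *m cV3 a b c = cV3 (lam * a + b) (lam * b + c) (lam * c).
Proof.
apply/matrixP => i j; rewrite !mxE !big_ord_recr big_ord0 /= !mxE.
by case: i => [[|[|[|]]]] //= _; rewrite ?mulr0 ?mul0r ?mul1r ?add0r ?addr0.
Qed.

Lemma unitmx_scalar_subJ6 (a b : R) :
  (a%:M - b *: J6 lam \in unitmx) = (a - b * lam != 0).
Proof.
have trig : is_trig_mx (a%:M - b *: J6 lam)^T.
  apply/is_trig_mxP => i j lt_ij; rewrite !mxE.
  have [-> ->] : (j == i) = false /\ (nat_of_ord i == j.+1) = false.
    by split; apply/negbTE; rewrite neq_ltn ?lt_ij ?orbT // ltnS ltnW.
  by rewrite mulr0 subrr.
rewrite unitmxE -det_tr det_trig // !big_ord_recr big_ord0 /= !mxE /= mulr1n mul1r.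
by rewrite unitfE -expr2 -exprSr expf_eq0.
Qed.

(* exp(t J6) v = e^{lam t} (I + t N + t^2/2 N^2) v, where N v = (v_1, v_2, 0). *)
Definition J6_flow (t : R) (v : 'cV[R]_3) : 'cV[R]_3 :=
  expR (lam * t) *:
    cV3 (v 0 0 + t * v 1 0 + t ^+ 2 / 2 * v 2 0) (v 1 0 + t * v 2 0) (v 2 0).

Lemma J6_flowD (s t : R) (v : 'cV[R]_3) :
  J6_flow (s + t) v = J6_flow t (J6_flow s v).
Proof.
by rewrite /J6_flow !mxE /= !scale_cV3 [lam * (s + t)]mulrDr expRD; congr cV3; field.
Qed.

End JordanBlock.

Lemma solves_ode_coord (R : realType) (n : nat) (M : 'M[R]_n) (x : R -> 'cV[R]_n)
    (i : 'I_n) (j : 'I_1) (t : R) :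
  solves_ode M x ->
  derivable (fun s => x s i j) t 1 /\ 'D_1 (fun s => x s i j) t = (M *m x t) i j.
Proof.
move=> /(_ t) [dx x']; split; first by move/derivable_mxP: dx; apply.
by have := derive_mx dx; rewrite -derive1E x' => /matrixP /(_ i j); rewrite !mxE.
Qed.

Lemma variation_of_constants (R : realType) (lam : R) (f g G : R -> R) :
  (forall t : R, derivable f t 1) ->
  (forall t : R, 'D_1 f t = lam * f t + expR (lam * t) * g t) ->
  (forall t : R, is_derive t (1 : R) G (g t)) ->
  forall t : R, f t = expR (lam * t) * (f 0 + G t - G 0).
Proof.
move=> df f' G' t.
pose E s := expR (- lam * s).
have E' (s : R) : is_derive s (1 : R) E (- lam * E s).
  have := @is_derive1_comp R expR (- lam \*: id) s _ _ (is_derive_expR _)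
    (is_deriveZ (- lam) (is_derive_id s 1)).
  by move=> dE; apply: is_derive_eq dE _; rewrite /GRing.scale /= mulr1 mulrC.
have EK (s : R) : expR (- lam * s) * expR (lam * s) = 1.
  by rewrite -expRD mulNr addNr expR0.
pose c s := E s * f s - G s.
have c' (s : R) : is_derive s (1 : R) c 0.
  have := is_deriveB (is_deriveM (E' s) (derivableP (df s))) (G' s).
  move=> dc; apply: is_derive_eq dc _.
  by rewrite f' /GRing.scale /= mulrDr [expR _ * (expR _ * _)]mulrA EK; ring.
have := is_derive_0_is_cst t 0 c'; rewrite /c /E mulr0 expR0 mul1r => ct.
have -> : f t = expR (lam * t) * (E t * f t) by rewrite mulrA [_ * E t]mulrC EK mul1r.
by rewrite -[E t * f t](subrK (G t)) ct; congr (_ * _); ring.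
Qed.

Section J6Solution.
Variables (R : realType) (lam : R) (x : R -> 'cV[R]_3).
Hypothesis x_sol : solves_ode (J6 lam) x.

Lemma J6_solution (t : R) : x t = J6_flow lam t (x 0).
Proof.
have dx (i : 'I_3) (s : R) := (solves_ode_coord i 0 s x_sol).1.
have x' (i : 'I_3) (s : R) :
    'D_1 (fun s => x s i 0) s =
    cV3 (lam * x s 0 0 + x s 1 0) (lam * x s 1 0 + x s 2 0) (lam * x s 2 0) i 0.
  by rewrite (solves_ode_coord i 0 s x_sol).2 {1}[x s]cV3E mul_J6_cV3.
have x2 s : x s 2 0 = expR (lam * s) * x 0 2 0.
  have x2' r : 'D_1 (fun s => x s 2 0) r = lam * x r 2 0 + expR (lam * r) * 0.
    by rewrite x' mxE mulr0 addr0.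
  have := variation_of_constants (dx 2) x2' (fun r => is_derive_cst 0 r 1) s.
  by rewrite subr0 addr0.
have x1 s : x s 1 0 = expR (lam * s) * (x 0 1 0 + s * x 0 2 0).
  have x1' r : 'D_1 (fun s => x s 1 0) r = lam * x r 1 0 + expR (lam * r) * x 0 2 0.
    by rewrite x' mxE /= x2.
  have G' (r : R) : is_derive r (1 : R) (x 0 2 0 \*: id) (x 0 2 0).
    apply: is_derive_eq (is_deriveZ _ (is_derive_id r 1)) _.
    by rewrite /GRing.scale /= mulr1.
  have := variation_of_constants (dx 1) x1' G' s.
  by rewrite /= /GRing.scale /= mulr0 subr0 [s * _]mulrC.
have x0 s : x s 0 0 =
    expR (lam * s) * (x 0 0 0 + s * x 0 1 0 + s ^+ 2 / 2 * x 0 2 0).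
  have x0' r : 'D_1 (fun s => x s 0 0) r =
      lam * x r 0 0 + expR (lam * r) * (x 0 1 0 + r * x 0 2 0).
    by rewrite x' mxE /= x1.
  have G' (r : R) : is_derive r (1 : R)
      (x 0 1 0 \*: id + (x 0 2 0 / 2) \*: (id * id)) (x 0 1 0 + r * x 0 2 0).
    apply: is_derive_eq (is_deriveD (is_deriveZ _ (is_derive_id r 1))
      (is_deriveZ _ (is_deriveM (is_derive_id r 1) (is_derive_id r 1)))) _.
    by rewrite /GRing.scale /=; field.
  have := variation_of_constants (dx 0) x0' G' s.
  by rewrite /= => ->; congr (_ * _); rewrite !fctE /= /GRing.scale /=; field.
by rewrite [LHS]cV3E /J6_flow scale_cV3 (x0 t) (x1 t) (x2 t).
Qed.

Lemma J6_solutionD (s t : R) : x (s + t) = J6_flow lam t (x s).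
Proof. by rewrite (J6_solution (s + t)) (J6_solution s) J6_flowD. Qed.

End J6Solution.

Lemma theta_scheme_uniq (R : realType) (n : nat) (M : 'M[R]_n)
    (psi phi theta : R) (u y1 y2 : 'cV[R]_n) :
  phi^-1%:M - theta *: M \in unitmx ->
  theta_scheme psi phi theta M u y1 -> theta_scheme psi phi theta M u y2 ->
  y1 = y2.
Proof.
rewrite /theta_scheme => unitA E1 E2; apply/eqP; rewrite -subr_eq0; apply/eqP.
rewrite -[y1 - y2](mulKmx unitA).
suff -> : (phi^-1%:M - theta *: M) *m (y1 - y2) = 0 by rewrite mulmx0.
rewrite mulmxBl mul_scalar_mx -scalemxAl.
have -> : phi^-1 *: (y1 - y2) = phi^-1 *: (y1 - psi *: u) - phi^-1 *: (y2 - psi *: u).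
  by rewrite -scalerBr opprB addrA subrK.
rewrite E1 E2 -mulmxBr opprD addrACA subrr addr0 -scalerBr scalemxAr.
exact: subrr.
Qed.

Section J6ThetaScheme.
Variables (R : realType) (lam h psi phi theta : R).
Hypotheses (h_gt0 : 0 < h) (lamh2_neq0 : lam * h + 2 != 0).
Hypothesis psiE : psi = expR (lam * h) * (2 - lam * h) / (lam * h + 2).
Hypothesis phiE : phi = h * (expR (lam * h) + 1) / (lam * h + 2).
Hypothesis thetaE : theta = (expR (lam * h) + 1)^-1.

Let expR1_neq0 : expR (lam * h) + 1 != 0.
Proof. by rewrite gt_eqF // addr_gt0 ?expR_gt0. Qed.

Lemma J6_theta_scheme_flow u :
  theta_scheme psi phi theta (J6 lam) u (J6_flow lam h u).
Proof.
rewrite /theta_scheme [u]cV3E /J6_flow !mxE /=.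
rewrite !(scale_cV3, opp_cV3, add_cV3) mul_J6_cV3 psiE phiE thetaE.
move: (u 0 0) (u 1 0) (u 2 0) (expR (lam * h)) expR1_neq0 => a b c e e1.
have h0 : h != 0 by rewrite gt_eqF.
by congr cV3; field; rewrite ?h0 ?e1 ?lamh2_neq0.
Qed.

Lemma J6_theta_scheme_unitmx : phi^-1%:M - theta *: J6 lam \in unitmx.
Proof.
rewrite unitmx_scalar_subJ6 phiE thetaE.
have -> : (h * (expR (lam * h) + 1) / (lam * h + 2))^-1 - (expR (lam * h) + 1)^-1 * lam
    = 2 / (h * (expR (lam * h) + 1)).
  by field; rewrite expR1_neq0 lamh2_neq0 gt_eqF.
by rewrite mulf_neq0 ?invr_eq0 ?mulf_neq0 ?gt_eqF // pnatr_eq0.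
Qed.

Lemma J6_theta_scheme_step u y :
  theta_scheme psi phi theta (J6 lam) u y -> y = J6_flow lam h u.
Proof.
by move=> E; apply: theta_scheme_uniq J6_theta_scheme_unitmx E (J6_theta_scheme_flow u).
Qed.

End J6ThetaScheme.

Theorem theorem10 (R : realType) (lam h : R) :
  0 < h -> lam * h + 2 != 0 ->
  let psi := expR (lam * h) * (2 - lam * h) / (lam * h + 2) in
  let phi := h * (expR (lam * h) + 1) / (lam * h + 2) in
  let theta := (expR (lam * h) + 1)^-1 in
  exact_scheme h (J6 lam) (theta_scheme psi phi theta (J6 lam)).
Proof.
move=> h_gt0 lamh2_neq0 psi phi theta x0 x x_sol x_0 xs xs_0 xs_step.
elim=> [|k IHk]; first by rewrite mul0r xs_0 x_0.
rewrite (J6_theta_scheme_step h_gt0 lamh2_neq0 _ _ _ (xs_step k)) // IHk.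
by rewrite -natr1 mulrDl mul1r (J6_solutionD x_sol).
Qed.
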